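(* Let $\mathbf A$ be a finite simple algebra of type 2 (affine type) whose traces have cardinality a power of the prime $p$. Then there is an integer $k$ depending only on $\mathbf A$ such that for every program $(t,\iota,S)$ over $\mathbf A$ of length $l$, there is a $\mathrm{BOUND}_k\circ\mathrm{MOD}_p$ circuit of size $O(l)$ computing the same Boolean function as $(t,\iota,S)$.
   Context: A finite algebra has finite universe and finitely many basic operations; it is simple if its only congruences are the trivial ones; its type is the tame congruence theory type of its unique prime quotient $0\prec 1$. An $n$-ary circuit over $\mathbf A$ is a DAG with one output node, sources labelled by variables $x_1,\dots,x_n$ or constants, gates labelled by basic operations; its size (length) is nodes plus edges. A program $(t,\iota,S)$ over $\mathbf A$ consists of an $n$-ary circuit $t$, $\iota:\{0,1\}\to A$ and $S\subseteq A$; it computes $b\mapsto 1$ iff $t(\iota(b_1),\dots,\iota(b_n))\in S$; its length is the size of $t$. A $\mathrm{MOD}_p$ gate with accepting set $T\subseteq\mathbb Z_p$ has unbounded fan-in and outputs 1 iff the sum of its Boolean inputs modulo $p$ is in $T$. A $\mathrm{BOUND}_k$ gate has at most $k$ inputs and computes an arbitrary Boolean function of them. A $\mathrm{BOUND}_k\circ\mathrm{MOD}_p$ circuit is a single $\mathrm{BOUND}_k$ gate whose inputs are $\mathrm{MOD}_p$ gates reading the input bits; its size is the number of edges plus gates. *)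

From mathcomp Require Import all_boot all_order all_algebra.
Set Implicit Arguments. Unset Strict Implicit. Unset Printing Implicit Defensive.
Import GRing.Theory.
Local Open Scope ring_scope.

Section Algebra.
Context (A : finType) (I : finType) (ar : I -> nat)
        (op : forall i : I, ('I_(ar i) -> A) -> A).

Definition congruence (theta : rel A) : Prop :=
  equivalence_rel theta /\
  forall i (x y : 'I_(ar i) -> A),
    (forall j, theta (x j) (y j)) -> theta (@op i x) (@op i y).

Definition cong0 : rel A := fun a b => a == b.
Definition cong1 : rel A := fun _ _ => true.

Definition simple_alg : Prop :=
  (1 < #|A|)%N /\
  forall theta, congruence theta ->
    (forall a b, theta a b = cong0 a b) \/ (forall a b, theta a b = cong1 a b).

(* Nodes are listed in topological order; a gate node refers to earlier
   nodes by their position in the list. *)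
Inductive node (n : nat) :=
| NVar of 'I_n
| NConst of A
| NGate (i : I) of ('I_(ar i) -> nat).

Record circuit (n : nat) := Circuit { c_nodes : seq (node n); c_out : node n }.

Definition node_wf n (k : nat) (v : node n) : bool :=
  match v with
  | NGate i args => [forall j, args j < k]%N
  | _ => true
  end.

Fixpoint nodes_wf n (k : nat) (s : seq (node n)) : bool :=
  match s with
  | [::] => true
  | v :: s' => node_wf k v && nodes_wf k.+1 s'
  end.

Definition circuit_wf n (c : circuit n) : bool :=
  nodes_wf 0 (c_nodes c) && node_wf (size (c_nodes c)) (c_out c).

(* [a0] is a dummy default, irrelevant for well-formed circuits *)
Definition node_val n (a0 : A) (x : 'I_n -> A) (vals : seq A) (v : node n) : A :=
  match v with
  | NVar j => x j
  | NConst a => a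
  | NGate i args => @op i (fun j => nth a0 vals (args j))
  end.

Fixpoint eval_nodes n a0 (x : 'I_n -> A) (vals : seq A) (s : seq (node n)) :=
  match s with
  | [::] => vals
  | v :: s' => eval_nodes a0 x (rcons vals (node_val a0 x vals v)) s'
  end.

Definition circ_eval n (a0 : A) (c : circuit n) (x : 'I_n -> A) : A :=
  node_val a0 x (eval_nodes a0 x [::] (c_nodes c)) (c_out c).

Definition node_edges n (v : node n) : nat :=
  match v with NGate i _ => ar i | _ => 0%N end.

(* size (length) = number of nodes + number of edges *)
Definition circ_size n (c : circuit n) : nat :=
  ((size (c_nodes c)).+1 + \sum_(v <- c_out c :: c_nodes c) node_edges v)%N.

Definition prog_eval n (t : circuit n) (iota : bool -> A) (S : {set A})
  (b : 'I_n -> bool) : bool :=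
  circ_eval (iota false) t (fun j => iota (b j)) \in S.

Definition is_poly n (f : ('I_n -> A) -> A) : Prop :=
  exists (c : circuit n) (a0 : A), circuit_wf c /\ forall x, f x = circ_eval a0 c x.

Definition is_upoly (f : A -> A) : Prop := is_poly (fun x : 'I_1 -> A => f (x ord0)).

Definition minimal_set (alpha beta : rel A) (U : {set A}) : Prop :=
  (exists f, is_upoly f /\ U = f @: [set: A] /\
             exists a b, beta a b && ~~ alpha (f a) (f b)) /\
  forall g, is_upoly g -> (exists a b, beta a b && ~~ alpha (g a) (g b)) ->
            ~~ (g @: [set: A] \proper U).

Definition trace (alpha beta : rel A) (N : {set A}) : Prop :=
  exists U, minimal_set alpha beta U /\
  exists b, N = U :&: [set x | beta b x] /\
  exists x y, [&& x \in N, y \in N & ~~ alpha x y].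

(* The induced algebra A|_N (whose operations are the restrictions to N of
   the polynomial operations of A preserving N) is polynomially equivalent
   to a one-dimensional vector space over a finite field F, identified with
   N via the bijection e. *)
Definition induced_affine (N : {set A}) : Prop :=
  exists (F : finFieldType) (e : F -> A),
    injective e /\ e @: [set: F] = N /\
    forall n (h : ('I_n -> F) -> F),
      (exists g, is_poly g /\ forall y, g (fun i => e (y i)) = e (h y)) <->
      (exists (c : 'I_n -> F) (d : F), forall y, h y = d + \sum_i c i * y i).

(* type of the prime quotient 0 < 1 of a simple algebra is 2 *)
Definition simple_type2 : Prop :=
  forall N, trace cong0 cong1 N -> induced_affine N.

End Algebra.

Record bm_circuit (n p : nat) := BMCircuit {
  bm_m : nat;
  bm_wires : 'I_bm_m -> seq 'I_n;
  bm_acc : 'I_bm_m -> {set 'I_p};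
  bm_out : ('I_bm_m -> bool) -> bool          (* the BOUND gate's function *)
}.

Definition mod_gate_val n p (w : seq 'I_n) (T : {set 'I_p}) (b : 'I_n -> bool) : bool :=
  [exists t in T, val t == (\sum_(j <- w) nat_of_bool (b j)) %% p]%N.

Definition bm_eval n p (c : bm_circuit n p) (b : 'I_n -> bool) : bool :=
  @bm_out _ _ c (fun j => mod_gate_val (@bm_wires _ _ c j) (@bm_acc _ _ c j) b).

(* size = edges (input->MOD and MOD->BOUND) + gates (MOD gates and BOUND gate) *)
Definition bm_size n p (c : bm_circuit n p) : nat :=
  (\sum_(j < bm_m c) size (@bm_wires _ _ c j) + bm_m c + (bm_m c).+1)%N.

(* The type 2 hypothesis identifies a trace [N] with a finite field [F] of
   characteristic [p]; let [coord] invert this identification.  For a binary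
   polynomial [G] with values in [N], the second differences
   [coord G(u',v') - coord G(u,v') - coord G(u',v) + coord G(u,v)] vanish: on
   [N x N] because [coord \o G \o e] is affine, and then for all arguments,
   because in each argument the pairs on which they vanish form an equivalence
   invariant under unary polynomials that relates two distinct points, hence,
   the algebra being simple, all pairs.  Slicing an n-ary polynomial into [N]
   along two disjoint sets of inputs shows that [b |-> coord G(iota \o b)] is
   an affine function of the bits [b] over [F], so its value only depends on
   the numbers, modulo [p], of set bits of each slope, and only variables of
   the circuit have a non-zero slope.  Finitely many unary polynomials into [N]
   separate the points of [A] (simplicity again), so the program computes a
   fixed Boolean function of boundedly many MOD_p counts, each reading only
   variables of the circuit. *)

From mathcomp Require Import all_boot all_order all_algebra all_field.
From Stdlib Require Import Classical ClassicalEpsilon FunctionalExtensionality.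
From mathcomp Require Import ring zify.
Set Implicit Arguments. Unset Strict Implicit. Unset Printing Implicit Defensive.
Import GRing.Theory.

Section Polynomials.
Context (A I : finType) (ar : I -> nat) (op : forall i : I, ('I_(ar i) -> A) -> A).

Inductive poly_op n : (('I_n -> A) -> A) -> Prop :=
| poly_var (j : 'I_n) : poly_op (fun x => x j)
| poly_const (a : A) : poly_op (fun _ => a)
| poly_app (i : I) (f : 'I_(ar i) -> ('I_n -> A) -> A) :
    (forall j, poly_op (f j)) -> poly_op (fun x => op (fun j => f j x)).

Lemma poly_op_ext n (f g : ('I_n -> A) -> A) :
  poly_op f -> (forall x, f x = g x) -> poly_op g.
Proof. by move=> pf fg; rewrite -(functional_extensionality _ _ fg). Qed.

Lemma poly_op_comp n m (f : ('I_n -> A) -> A) (g : 'I_n -> ('I_m -> A) -> A) :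
  poly_op f -> (forall j, poly_op (g j)) -> poly_op (fun y => f (fun j => g j y)).
Proof.
move=> pf pg; elim: pf => [j|a|i h _ IH] //; first exact: poly_const.
exact: (@poly_app m i (fun j y => h j (fun k => g k y)) IH).
Qed.

Definition upoly (g : A -> A) := poly_op (fun x : 'I_1 -> A => g (x ord0)).

Definition bpoly (G : A -> A -> A) := poly_op (fun x : 'I_2 -> A => G (x ord0) (x ord_max)).

Lemma upoly_id : upoly id.
Proof. exact: poly_var. Qed.

Lemma poly_op_upoly n (g : A -> A) (j : 'I_n) : upoly g -> poly_op (fun x => g (x j)).
Proof. by move=> pg; apply: (poly_op_comp pg (g := fun _ x => x j)) => _; apply: poly_var. Qed.

Lemma upoly_comp g h : upoly g -> upoly h -> upoly (g \o h).
Proof. by move=> pg ph; apply: (poly_op_comp pg (g := fun _ x => h (x ord0))). Qed.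

Lemma bpoly_comp G g h : bpoly G -> upoly g -> upoly h -> bpoly (fun x y => G (g x) (h y)).
Proof.
move=> pG pg ph.
apply: (poly_op_comp pG (g := fun j x => if val j == 0%N then g (x ord0) else h (x ord_max))).
by move=> j; case: (val j == 0%N); apply: poly_op_upoly.
Qed.

Lemma bpoly_swap G : bpoly G -> bpoly (fun x y => G y x).
Proof.
move=> pG; apply: (poly_op_comp pG (g := fun j x => if val j == 0%N then x ord_max else x ord0)).
by move=> j; case: (val j == 0%N); apply: poly_var.
Qed.

End Polynomials.

(** * Circuits compute exactly the polynomial operations *)

Section Circuits.
Context (A I : finType) (ar : I -> nat) (op : forall i : I, ('I_(ar i) -> A) -> A).
Notation node := (@node A I ar).
Notation circuit := (@circuit A I ar).
Notation poly_op := (poly_op op).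

Section Evaluation.
Variables (n : nat) (a0 : A) (x : 'I_n -> A).
Notation eval := (eval_nodes op a0 x).

Lemma eval_nodes_cat vals s1 s2 : eval vals (s1 ++ s2) = eval (eval vals s1) s2.
Proof. by elim: s1 vals => //= v s1 IH vals; rewrite IH. Qed.

Lemma size_eval_nodes vals s : size (eval vals s) = (size vals + size s)%N.
Proof. by elim: s vals => [|v s IH] vals /=; rewrite ?addn0 // IH size_rcons addSnnS. Qed.

Lemma nth_eval_nodes_last vals s v :
  nth a0 (eval vals (rcons s v)) (size vals + size s) = node_val op a0 x (eval vals s) v.
Proof. by rewrite -cats1 eval_nodes_cat /= nth_rcons size_eval_nodes ltnn eqxx. Qed.

End Evaluation.

Lemma nodes_wf_cat n k (s1 s2 : seq (node n)) :
  nodes_wf k (s1 ++ s2) = nodes_wf k s1 && nodes_wf (k + size s1) s2.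
Proof. by elim: s1 k => [|v s1 IH] k /=; rewrite ?addn0 // IH addSnnS andbA. Qed.

Section Relocation.
Variable n : nat.

Definition shift_node (off : nat) (v : node n) : node n :=
  if v is NGate i args then @NGate A I ar n i (fun j => off + args j)%N else v.

Lemma node_wf_shift off k v : node_wf (off + k) (shift_node off v) = node_wf k v.
Proof. by case: v => //= i args; apply: eq_forallb => j; rewrite ltn_add2l. Qed.

Lemma nodes_wf_shift off k s : nodes_wf (off + k) (map (shift_node off) s) = nodes_wf k s.
Proof. by elim: s k => //= v s IH k; rewrite node_wf_shift -addnS IH. Qed.

Lemma eval_nodes_shift a0 x pre vals s :
  eval_nodes op a0 x (pre ++ vals) (map (shift_node (size pre)) s) =
  pre ++ eval_nodes op a0 x vals s.
Proof.
elim: s vals => //= v s IH vals; rewrite -IH rcons_cat; congr (eval_nodes _ _ _ (_ ++ rcons _ _) _).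
case: v => //= i args; congr (op _); apply: functional_extensionality => j.
by rewrite nth_cat ltnNge leq_addr addKn.
Qed.

(* The circuits [cs] laid out one after the other from position [off], each
   followed by its output node; [out_pos off cs j] is where the output of the
   [j]-th circuit ends up. *)
Fixpoint concat_circuits (off : nat) (cs : seq (circuit n)) : seq (node n) :=
  if cs is c :: cs' then
    map (shift_node off) (rcons (c_nodes c) (c_out c)) ++
    concat_circuits (off + (size (c_nodes c)).+1) cs'
  else [::].

Fixpoint out_pos (off : nat) (cs : seq (circuit n)) (j : nat) : nat :=
  if cs is c :: cs' then
    if j is j'.+1 then out_pos (off + (size (c_nodes c)).+1) cs' j'
    else (off + size (c_nodes c))%N
  else 0%N.

Lemma concat_circuits_wf off cs :
  all (@circuit_wf _ _ _ n) cs -> nodes_wf off (concat_circuits off cs).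
Proof.
elim: cs off => //= c cs IH off /andP[/andP[wf_nodes wf_out] wf_cs].
rewrite nodes_wf_cat size_map size_rcons IH // andbT.
by rewrite -[X in nodes_wf X _]addn0 nodes_wf_shift -cats1 nodes_wf_cat wf_nodes /= wf_out.
Qed.

Lemma out_pos_lt off cs j :
  (j < size cs)%N -> (out_pos off cs j < off + size (concat_circuits off cs))%N.
Proof.
elim: cs off j => //= c cs IH off [_|j]; rewrite size_cat size_map size_rcons; first lia.
by rewrite ltnS => /(IH (off + (size (c_nodes c)).+1)); rewrite addnA.
Qed.

Lemma eval_concat_circuits a0 x cs pre :
  exists w, eval_nodes op a0 x pre (concat_circuits (size pre) cs) = pre ++ w /\
    forall j c0, (j < size cs)%N ->
      nth a0 (pre ++ w) (out_pos (size pre) cs j) = circ_eval op a0 (nth c0 cs j) x.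
Proof.
elim: cs pre => [|c cs IH] pre /=; first by exists [::]; rewrite cats0.
set B := eval_nodes op a0 x [::] (rcons (c_nodes c) (c_out c)).
have sizeB : size B = (size (c_nodes c)).+1 by rewrite size_eval_nodes size_rcons.
have [w [eval_w out_w]] := IH (pre ++ B).
rewrite size_cat sizeB in eval_w out_w.
have := eval_nodes_shift a0 x pre [::] (rcons (c_nodes c) (c_out c)).
rewrite cats0 eval_nodes_cat => ->; rewrite eval_w.
exists (B ++ w); rewrite catA; split=> // -[_|j] c0 /=; last exact: out_w.
rewrite -catA nth_cat ltnNge leq_addr addKn nth_cat sizeB ltnSn.
by rewrite -[size (c_nodes c)]add0n nth_eval_nodes_last.
Qed.

End Relocation.

Lemma compile n (f : ('I_n -> A) -> A) :
  poly_op f -> exists c : circuit n, circuit_wf c /\ forall a0 x, f x = circ_eval op a0 c x.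
Proof.
elim=> [j|a|i h _ IH]; first by exists (Circuit [::] (NVar A ar j)).
  by exists (Circuit [::] (@NConst A I ar n a)).
have [cj cjP] := fin_all_exists IH.
pose cs := map cj (enum 'I_(ar i)).
have size_cs : size cs = ar i by rewrite size_map size_enum_ord.
have nth_cs (j : 'I_(ar i)) c0 : nth c0 cs j = cj j.
  by rewrite (nth_map j) ?size_enum_ord // nth_ord_enum.
have wf_cs : all (@circuit_wf _ _ _ n) cs.
  by rewrite all_map; apply/allP => j _; case: (cjP j).
exists (Circuit (concat_circuits 0 cs) (@NGate A I ar n i (fun j => out_pos 0 cs j))); split.
  rewrite /circuit_wf /= concat_circuits_wf //=; apply/forallP => j.
  by have := @out_pos_lt n 0 cs j; rewrite size_cs ltn_ord => /(_ isT).
move=> a0 x; rewrite /circ_eval /=.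
have [w [-> out_w]] := @eval_concat_circuits n a0 x cs [::].
congr (op _); apply: functional_extensionality => j.
by rewrite (out_w j (cj j)) ?size_cs // nth_cs; case: (cjP j) => _ /(_ a0 x) ->.
Qed.

Lemma is_poly_poly_op n (a0 : A) (f : ('I_n -> A) -> A) : poly_op f -> is_poly op f.
Proof. by case/compile => c [wf_c fc]; exists c, a0. Qed.

Lemma poly_op_node_val n a0 (L : seq (('I_n -> A) -> A)) v :
  (forall k, (k < size L)%N -> poly_op (nth (fun _ => a0) L k)) -> node_wf (size L) v ->
  poly_op (fun x => node_val op a0 x (map (fun f => f x) L) v).
Proof.
move=> pL; case: v => [j|a|i args] /= wf_v; [exact: poly_var|exact: poly_const|].
move/forallP: wf_v => lt_args.
apply: (poly_op_ext (poly_app (f := fun j => nth (fun _ => a0) L (args j)) (fun j => pL _ (lt_args j)))).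
by move=> x; congr (op _); apply: functional_extensionality => j; rewrite (nth_map (fun _ => a0)).
Qed.

Lemma poly_op_eval_nodes n a0 (L : seq (('I_n -> A) -> A)) s :
  (forall k, (k < size L)%N -> poly_op (nth (fun _ => a0) L k)) -> nodes_wf (size L) s ->
  exists L', [/\ forall k, (k < size L')%N -> poly_op (nth (fun _ => a0) L' k),
    size L' = (size L + size s)%N &
    forall x, eval_nodes op a0 x (map (fun f => f x) L) s = map (fun f => f x) L'].
Proof.
elim: s L => [|v s IH] L pL /=; first by exists L; rewrite addn0.
case/andP=> wf_v wf_s.
pose L1 := rcons L (fun x => node_val op a0 x (map (fun f => f x) L) v).
have pL1 k : (k < size L1)%N -> poly_op (nth (fun _ => a0) L1 k).
  rewrite size_rcons ltnS leq_eqVlt nth_rcons => /orP[/eqP->|lt_k]; last by rewrite lt_k; apply: pL.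
  by rewrite ltnn eqxx; apply: poly_op_node_val.
have [L' [pL' size_L' eval_L']] := IH L1 pL1 (ltac:(by rewrite size_rcons)).
exists L'; split=> //; first by rewrite size_L' size_rcons addSnnS.
by move=> x; rewrite -eval_L' map_rcons.
Qed.

Lemma poly_op_circ_eval n a0 (c : circuit n) :
  circuit_wf c -> poly_op (circ_eval op a0 c).
Proof.
case/andP=> wf_nodes wf_out.
have [L' [pL' size_L' eval_L']] := @poly_op_eval_nodes n a0 [::] _ (fun k => ltac:(by [])) wf_nodes.
have := @poly_op_node_val _ a0 L' (c_out c) pL'; rewrite size_L' => /(_ wf_out) p_out.
by apply: (poly_op_ext p_out) => x; rewrite /circ_eval -eval_L'.
Qed.

Definition node_vars n (v : node n) : seq 'I_n := if v is NVar j then [:: j] else [::].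

Definition circ_vars n (c : circuit n) : seq 'I_n :=
  undup (flatten (map (@node_vars n) (c_out c :: c_nodes c))).

Lemma size_circ_vars n (c : circuit n) : (size (circ_vars c) <= circ_size c)%N.
Proof.
apply: leq_trans (size_undup _) _; rewrite /circ_size size_flatten /shape sumnE !big_map.
apply: leq_trans (leq_addr (\sum_(v <- c_out c :: c_nodes c) node_edges v) _).
rewrite -[X in (_ <= X)%N]/(size (c_out c :: c_nodes c)) -sum1_size leq_sum // => -[] //.
Qed.

Lemma eval_nodes_vars n a0 (x x' : 'I_n -> A) vals s :
  {in flatten (map (@node_vars n) s), x =1 x'} -> eval_nodes op a0 x vals s = eval_nodes op a0 x' vals s.
Proof.
elim: s vals => //= v s IH vals xx'; rewrite IH => [|j s_j]; last by rewrite xx' // mem_cat s_j orbT.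
by case: v xx' => //= j xx'; rewrite xx' // mem_head.
Qed.

Lemma circ_eval_vars n a0 (c : circuit n) (x x' : 'I_n -> A) :
  {in circ_vars c, x =1 x'} -> circ_eval op a0 c x = circ_eval op a0 c x'.
Proof.
move=> xx'; rewrite /circ_eval (@eval_nodes_vars _ _ x x') => [|j s_j]; last first.
  by rewrite xx' // mem_undup /= mem_cat s_j orbT.
by move: xx'; rewrite /circ_vars; case: (c_out c) => // j xx' /=; rewrite xx' // mem_undup /= mem_head.
Qed.

End Circuits.

Section Simplicity.
Context (A I : finType) (ar : I -> nat) (op : forall i : I, ('I_(ar i) -> A) -> A).
Notation upoly := (upoly op).

Definition poly_invariant_equiv (th : A -> A -> Prop) :=
  [/\ forall a, th a a, forall a b, th a b -> th b a,
      forall a b c, th a b -> th b c -> th a c &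
      forall g, upoly g -> forall a b, th a b -> th (g a) (g b)].

Definition rel_of (th : A -> A -> Prop) : rel A :=
  fun a b => if excluded_middle_informative (th a b) then true else false.

Lemma rel_ofP th a b : reflect (th a b) (rel_of th a b).
Proof. by rewrite /rel_of; case: excluded_middle_informative => h; constructor. Qed.

Lemma upoly_op_upd i (x : 'I_(ar i) -> A) (j : 'I_(ar i)) :
  upoly (fun s => op (fun k => if k == j then s else x k)).
Proof.
apply: (poly_app (f := fun k y => if k == j then y ord0 else x k)) => k.
by case: (k == j); [apply: poly_var | apply: poly_const].
Qed.

(* Arguments are replaced one at a time, each step being a unary polynomial. *)
Lemma congruence_rel_of th : poly_invariant_equiv th -> congruence op (rel_of th).
Proof.
case=> th_refl th_sym th_trans th_poly; split.
  move=> a b c; split; first exact/rel_ofP.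
  move/rel_ofP=> th_ab; apply/rel_ofP/rel_ofP; first exact: th_trans (th_sym _ _ th_ab).
  exact: th_trans th_ab.
move=> i x y th_xy; apply/rel_ofP.
pose z m (j : 'I_(ar i)) := if (j < m)%N then y j else x j.
suff th_z m : th (op x) (op (z m)).
  by have := th_z (ar i); congr (th _ (op _)); apply: functional_extensionality => j; rewrite /z ltn_ord.
elim: m => [|m IH].
  have -> : z 0%N = x by apply: functional_extensionality.
  exact: th_refl.
apply: th_trans IH _; have [lt_m|ge_m] := ltnP m (ar i); last first.
  have -> : z m.+1 = z m.
    apply: functional_extensionality => j; have lt_j := leq_trans (ltn_ord j) ge_m.
    by rewrite /z ltnS ltnW // lt_j.
  exact: th_refl.
pose jm := Ordinal lt_m.
have -> : op (z m) = op (fun k => if k == jm then x jm else z m k).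
  by congr (op _); apply: functional_extensionality => k; case: eqVneq => [->|]; rewrite /z ?ltnn.
have -> : op (z m.+1) = op (fun k => if k == jm then y jm else z m k).
  congr (op _); apply: functional_extensionality => k; rewrite /z.
  case: eqVneq => [->|ne_k]; first by rewrite ltnSn.
  by rewrite ltnS leq_eqVlt -[(k == m :> nat)]/(k == jm) (negbTE ne_k).
exact: th_poly (upoly_op_upd (z m) jm) _ _ (rel_ofP _ _ _ (th_xy jm)).
Qed.

Lemma simple_poly_invariant_equiv th : simple_alg op -> poly_invariant_equiv th ->
  (forall a b, th a b -> a = b) \/ (forall a b, th a b).
Proof.
case=> _ simpleA /congruence_rel_of/simpleA[] th_triv; [left|right] => a b;
  by have := th_triv a b; case: rel_ofP => // _ /esym/eqP.
Qed.

End Simplicity.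

(** * Minimal sets and traces *)

Section Traces.
Context (A I : finType) (ar : I -> nat) (op : forall i : I, ('I_(ar i) -> A) -> A).
Notation upoly := (upoly op).

Definition nonconst (f : A -> A) := exists a b, f a != f b.

Lemma upoly_is_upoly g : is_upoly op g -> upoly g.
Proof.
case=> c [a0 [wf_c gc]]; apply: (poly_op_ext (poly_op_circ_eval op a0 wf_c)) => x.
by rewrite gc.
Qed.

Lemma is_upoly_id : A -> is_upoly op id.
Proof. by move=> a0; exists (Circuit [::] (NVar A ar (@ord0 0))), a0. Qed.

Lemma minimal_nonconst_upoly f : is_upoly op f -> nonconst f ->
  exists2 f, is_upoly op f /\ nonconst f &
    forall g, is_upoly op g -> nonconst g -> ~~ (g @: [set: A] \proper f @: [set: A]).
Proof.
move: {2}#|_| (erefl #|f @: [set: A]|) => k; elim/ltn_ind: k f => k IH f size_f pf ncf.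
have [[g [pg [ncg ltgf]]]|minf] := classic (exists g, is_upoly op g /\ nonconst g /\
                                        g @: [set: A] \proper f @: [set: A]).
  by apply: (IH #|g @: [set: A]|) => //; rewrite -size_f; apply: proper_card.
by exists f => // g pg ncg; apply/negP => ltgf; apply: minf; exists g.
Qed.

Lemma exists_trace : (1 < #|A|)%N ->
  exists2 f, is_upoly op f /\ nonconst f & trace op (@cong0 A) (@cong1 A) (f @: [set: A]).
Proof.
move=> gt1; have [a [b [_ _ ne_ab]]] := card_gt1P gt1.
have ncid : nonconst id by exists a, b.
have [f [pf ncf] minf] := minimal_nonconst_upoly (is_upoly_id a) ncid.
have [a' [b' ne_f]] := ncf.
exists f => //; exists (f @: [set: A]); split.
  split; first by exists f; do 2?split=> //; exists a', b'.
  by move=> g pg [a'' [b'' /= ncg]]; apply: minf => //; exists a'', b''.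
exists a; split; first by apply/setP => z; rewrite !inE andbT.
by exists (f a'), (f b'); rewrite !imset_f.
Qed.

Section Separation.
Hypothesis simpleA : simple_alg op.
Variables (f : A -> A) (pf : upoly f) (ncf : nonconst f).

Lemma separating_upoly z z' : z != z' -> exists2 v, upoly v & f (v z) != f (v z').
Proof.
move=> ne_zz'; pose th x y := forall v, upoly v -> f (v x) = f (v y).
have [th_eq|th_all] : (forall x y, th x y -> x = y) \/ (forall x y, th x y).
- apply: (simple_poly_invariant_equiv simpleA); split => [x v|x y th_xy v pv|x y w th_xy th_yw v pv|].
  + by [].
  + by rewrite th_xy.
  + by rewrite th_xy // th_yw.
  + by move=> g pg x y th_xy v pv; apply: (th_xy (v \o g)); apply: upoly_comp.
- apply: NNPP => no_v; move/eqP: ne_zz'; apply; apply: th_eq => v pv.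
  by apply: NNPP => ne_v; apply: no_v; exists v => //; apply/eqP.
- by case: ncf => a [b /negP[]]; apply/eqP; apply: (th_all a b id (upoly_id op)).
Qed.

Lemma separating_family : exists u : A * A -> A -> A,
  [/\ forall zz, upoly (u zz), forall zz x, u zz x \in f @: [set: A] &
      forall z z', (forall zz, u zz z = u zz z') -> z = z'].
Proof.
have /fin_all_exists[u uP] : forall zz : A * A, exists g : A -> A,
    [/\ upoly g, forall x, g x \in f @: [set: A] & zz.1 != zz.2 -> g zz.1 != g zz.2].
  move=> [z z'] /=; have [<-|/separating_upoly[v pv ne_v]] := eqVneq z z'.
    by exists f; split=> // x; rewrite imset_f.
  exists (f \o v); split=> // [|x]; first exact: upoly_comp.
  by rewrite /= imset_f.
exists u; split=> [zz|zz x|z z' eq_u]; [by case: (uP zz)|by case: (uP zz)|].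
have [_ _ /contraR sep_u] := uP (z, z'); apply/eqP/sep_u => /=.
by rewrite eq_u eqxx.
Qed.

End Separation.
End Traces.

Lemma sum_partition_value (R : nmodType) (T : Type) (K : finType) (s : seq T)
    (d : T -> K) (w : K -> R) (m : T -> nat) :
  (\sum_(i <- s) w (d i) *+ m i = \sum_(k : K) w k *+ (\sum_(i <- s | d i == k) m i)%N)%R.
Proof.
rewrite (partition_big d xpredT) //=; apply: eq_bigr => k _; rewrite -sumrMnr.
by apply: eq_bigr => i /eqP ->.
Qed.

Lemma mulrn_modn_pchar (R : nzRingType) p (x : R) k : p \in [pchar R]%R -> (x *+ k = x *+ (k %% p))%R.
Proof. by move=> pR; rewrite -mulr_natr -[RHS]mulr_natr (GRing.natr_mod_pchar pR). Qed.

Lemma bm_circuit_of_gates n p (X : finType) (W : X -> seq 'I_n) (T : X -> {set 'I_p})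
    (out : (X -> bool) -> bool) l :
  (0 < l)%N -> (forall x, size (W x) <= l)%N ->
  exists c : bm_circuit n p,
    [/\ bm_m c = #|X|, (bm_size c <= (3 * #|X|).+1 * l)%N &
        forall b, bm_eval c b = out (fun x => mod_gate_val (W x) (T x) b)].
Proof.
move=> l_gt0 size_W.
exists (@BMCircuit n p #|X| (fun j => W (enum_val j)) (fun j => T (enum_val j)) (fun o => out (o \o enum_rank))).
split=> [//||b]; last first.
  by rewrite /bm_eval /=; congr out; apply: functional_extensionality => x; rewrite /= enum_rankK.
have sum_W : (\sum_(j < #|X|) size (W (enum_val j)) <= #|X| * l)%N.
  apply: (@leq_trans (\sum_(j < #|X|) l)); first exact: leq_sum.
  by rewrite big_const_ord iter_addn_0 mulnC.
have le_X : (#|X| <= #|X| * l)%N by rewrite leq_pmulr.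
move: sum_W le_X; rewrite /bm_size /= mulSn -mulnA.
move: (\sum_(j < _) _)%N (#|X| * l)%N => sw kl; lia.
Qed.

Definition pick_residue p (o : 'I_p -> bool) : nat := if [pick r | o r] is Some r then val r else 0%N.

Lemma pick_residue_mod_gates n p (w : seq 'I_n) b : (0 < p)%N ->
  pick_residue (fun r : 'I_p => mod_gate_val w [set r] b) = ((\sum_(j <- w) b j) %% p)%N.
Proof.
have gateE (r : 'I_p) : mod_gate_val w [set r] b = (val r == (\sum_(j <- w) b j) %% p)%N.
  apply/existsP/idP => [[r' /andP[]]|eq_r]; first by rewrite inE => /eqP ->.
  by exists r; rewrite inE eqxx.
move=> p_gt0; rewrite /pick_residue; case: pickP => [r|none]; first by rewrite gateE => /eqP.
by have := none (Ordinal (ltn_pmod (\sum_(j <- w) b j) p_gt0)); rewrite gateE eqxx.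
Qed.

(** * Second differences on an affine trace *)

Section AffineTrace.
Local Open Scope ring_scope.
Context (A I : finType) (ar : I -> nat) (op : forall i : I, ('I_(ar i) -> A) -> A).
Hypothesis simpleA : simple_alg op.
Variables (N : {set A}) (F : finFieldType) (e : F -> A).
Hypotheses (e_inj : injective e) (e_N : e @: [set: F] = N).
Hypothesis affineN : forall n (h : ('I_n -> F) -> F),
  (exists g, is_poly op g /\ forall y, g (fun i => e (y i)) = e (h y)) <->
  (exists (c : 'I_n -> F) (d : F), forall y, h y = d + \sum_i c i * y i).

Definition coord (a : A) : F := odflt 0 [pick z | e z == a].

Lemma coordK a : a \in N -> e (coord a) = a.
Proof.
rewrite -e_N => /imsetP[z _ ->]; rewrite /coord.
by case: pickP => [z' /eqP // | /(_ z)]; rewrite eqxx.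
Qed.

Definition Nbpoly (G : A -> A -> A) := bpoly op G /\ forall u v, G u v \in N.

Lemma Nbpoly_comp G g h : Nbpoly G -> upoly op g -> upoly op h -> Nbpoly (fun x y => G (g x) (h y)).
Proof. by case=> pG GN pg ph; split=> //; apply: bpoly_comp. Qed.

Lemma Nbpoly_swap G : Nbpoly G -> Nbpoly (fun x y => G y x).
Proof. by case=> pG GN; split=> //; apply: bpoly_swap. Qed.

Definition rect_diff (G : A -> A -> A) u u' v v' : F :=
  coord (G u' v') - coord (G u v') - coord (G u' v) + coord (G u v).

Lemma rect_diff_swap G u u' v v' : rect_diff G u u' v v' = rect_diff (fun x y => G y x) v v' u u'.
Proof. by rewrite /rect_diff; ring. Qed.

(* On [N] itself, [coord \o G \o e] is affine by the type 2 hypothesis. *)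
Lemma rect_diff_e G p q r s : Nbpoly G -> rect_diff G (e p) (e q) (e r) (e s) = 0.
Proof.
case=> pG GN; pose h (y : 'I_2 -> F) := coord (G (e (y ord0)) (e (y ord_max))).
have /affineN[c [d hcd]] : exists g, is_poly op g /\ forall y, g (fun i => e (y i)) = e (h y).
  exists (fun x => G (x ord0) (x ord_max)); split; first exact: (is_poly_poly_op (e 0) pG).
  by move=> y; rewrite coordK.
have hG y0 y1 : coord (G (e y0) (e y1)) = d + c ord0 * y0 + c ord_max * y1.
  have := hcd (fun i => if val i == 0%N then y0 else y1).
  rewrite /h /= => ->; rewrite !big_ord_recl big_ord0 addr0 addrA /=.
  by congr (_ + c _ * _); apply: val_inj.
by rewrite /rect_diff !hG; ring.
Qed.

(* The pairs [(v, v')] at which all second differences vanish form a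
   polynomially invariant equivalence relating the distinct [e 0] and [e 1]. *)
Lemma rect_diff_total (U : pred A) :
  (forall G u u', Nbpoly G -> U u -> U u' -> rect_diff G u u' (e 0) (e 1) = 0) ->
  forall G u u' v v', Nbpoly G -> U u -> U u' -> rect_diff G u u' v v' = 0.
Proof.
move=> vanish01.
pose th v v' := forall G u u', Nbpoly G -> U u -> U u' -> rect_diff G u u' v v' = 0.
suff th_all : forall v v', th v v' by move=> G u u' v v'; apply: th_all.
have [th_eq|//] : (forall a b, th a b -> a = b) \/ (forall a b, th a b).
  apply: (simple_poly_invariant_equiv simpleA).
  split=> [v G u u' _ _ _|v v' th_vv' G u u' nG Uu Uu'|v v' v'' th_vv' th_v'v'' G u u' nG Uu Uu'|].
  - by rewrite /rect_diff; ring.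
  - have -> : rect_diff G u u' v' v = - rect_diff G u u' v v' by rewrite /rect_diff; ring.
    by rewrite th_vv' ?oppr0.
  - have -> : rect_diff G u u' v v'' = rect_diff G u u' v v' + rect_diff G u u' v' v''.
      by rewrite /rect_diff; ring.
    by rewrite th_vv' ?th_v'v'' ?addr0.
  - move=> g pg v v' th_vv' G u u' nG; exact: (th_vv' (fun x y => G x (g y)))
       (Nbpoly_comp nG (upoly_id op) pg).
by have /e_inj/eqP := th_eq _ _ vanish01; rewrite eq_sym oner_eq0.
Qed.

Theorem rect_diff0 G u u' v v' : Nbpoly G -> rect_diff G u u' v v' = 0.
Proof.
have vanishN G' u0 u1 v0 v1 : Nbpoly G' -> u0 \in N -> u1 \in N -> rect_diff G' u0 u1 v0 v1 = 0.
  apply: (rect_diff_total (U := fun a => a \in N)) => {}G' {}u0 {}u1 nG /=.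
  by rewrite -e_N => /imsetP[p _ ->] /imsetP[q _ ->]; apply: rect_diff_e.
move=> nG; apply: (rect_diff_total (U := predT)) => // {}G {}u {}u' {}nG _ _.
rewrite rect_diff_swap vanishN //; first exact: Nbpoly_swap.
all: by rewrite -e_N imset_f.
Qed.

Section Bits.
Variables (n : nat) (G : ('I_n -> A) -> A) (iota : bool -> A).
Hypotheses (pG : poly_op op G) (GN : forall x, G x \in N).

Definition bit_coord (b : 'I_n -> bool) : F := coord (G (fun j => iota (b j))).

(* [rect_diff0] for the slice setting the inputs in [b1] to [s] and those in
   [b2] to [s']. *)
Lemma bit_coord_or b1 b2 :
  bit_coord (fun j => b1 j || b2 j) - bit_coord (fun j => ~~ b1 j && b2 j)
    - bit_coord b1 + bit_coord (fun=> false) = 0.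
Proof.
pose H s s' := G (fun j => if b1 j then s else if b2 j then s' else iota false).
have nH : Nbpoly H.
  split=> [|s s']; last exact: GN.
  apply: (poly_op_comp pG) => j; case: (b1 j); first exact: poly_var.
  by case: (b2 j); [apply: poly_var | apply: poly_const].
rewrite -(rect_diff0 (iota false) (iota true) (iota false) (iota true) nH).
congr (_ - _ - _ + _); congr (coord (G _)); apply: functional_extensionality => j.
all: by case: (b1 j); case: (b2 j).
Qed.

Lemma bit_coord_mem (s : seq 'I_n) : uniq s ->
  bit_coord (fun j => j \in s) = bit_coord (fun=> false) +
    \sum_(i <- s) (bit_coord (pred1 i) - bit_coord (fun=> false)).
Proof.
elim: s => [_|i s IH /= /andP[i_notin_s /IH {}IH]].
  by rewrite big_nil addr0.
have := bit_coord_or (pred1 i) (fun j => j \in s).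
have -> : (fun j => ~~ pred1 i j && (j \in s)) = (fun j => j \in s).
  apply: functional_extensionality => j /=.
  by case: eqVneq => [->|] //=; rewrite (negbTE i_notin_s).
have -> : (fun j => pred1 i j || (j \in s)) = (fun j => j \in i :: s).
  by apply: functional_extensionality => j; rewrite /= inE.
rewrite big_cons IH => E; apply/eqP; rewrite -subr_eq0 -[X in _ == X]E; apply/eqP; ring.
Qed.

Definition bit_slope i := bit_coord (pred1 i) - bit_coord (fun=> false).

Lemma bit_coord_sum b : bit_coord b = bit_coord (fun=> false) + \sum_i bit_slope i *+ b i.
Proof.
have := bit_coord_mem (filter_uniq b (enum_uniq 'I_n)).
rewrite big_filter big_enum_cond big_mkcond /=.
have -> : (fun j => j \in [seq i <- enum 'I_n | b i]) = b.
  by apply: functional_extensionality => j; rewrite /= mem_filter mem_enum andbT.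
by move->; congr (_ + _); apply: eq_bigr => i _; rewrite mulrb.
Qed.

Lemma bit_coord_count p (s : seq 'I_n) b : p \in [pchar F] -> uniq s ->
    {in [predC s], forall i, bit_slope i = 0} ->
  bit_coord b = bit_coord (fun=> false) +
    \sum_(v : F) v *+ ((\sum_(i <- s | bit_slope i == v) b i) %% p).
Proof.
move=> pF uniq_s slope0; rewrite bit_coord_sum (bigID (mem s)) /=.
rewrite [X in _ + (_ + X)]big1 ?addr0 => [|i /slope0 ->]; last by rewrite mul0rn.
rewrite -big_uniq // (sum_partition_value _ bit_slope id); congr (_ + _).
by apply: eq_bigr => v _; apply: mulrn_modn_pchar.
Qed.

End Bits.

Lemma coord_inj : {in N &, injective coord}.
Proof. by move=> a a' Na Na' /(congr1 e); rewrite !coordK. Qed.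

Section Program.
Variables (p : nat) (K : finType) (u : K -> A -> A).
Hypotheses (pF : p \in [pchar F]) (pu : forall k, upoly op (u k)) (uN : forall k x, u k x \in N)
  (u_inj : forall z z', (forall k, u k z = u k z') -> z = z').

Lemma program_bm_circuit n (t : circuit A ar n) (iota : bool -> A) (S : {set A}) :
  circuit_wf t -> exists c : bm_circuit n p,
    [/\ bm_m c = #|{: K * F * 'I_p}|, (bm_size c <= (3 * #|{: K * F * 'I_p}|).+1 * circ_size t)%N &
        forall b, bm_eval c b = prog_eval op t iota S b].
Proof.
move=> wf_t; pose G k x := u k (circ_eval op (iota false) t x).
have pG k : poly_op op (G k).
  exact: (poly_op_comp (pu k) (fun _ => poly_op_circ_eval op (iota false) wf_t)).
pose vars := circ_vars t; pose slope k := bit_slope (G k) iota.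
have slope0 k : {in [predC vars], forall i, slope k i = 0}.
  move=> i; rewrite inE => i_notin; rewrite /slope /bit_slope /bit_coord /G.
  have -> : circ_eval op (iota false) t (fun j => iota (pred1 i j)) =
            circ_eval op (iota false) t (fun=> iota false).
    by apply: circ_eval_vars => j j_in /=; case: eqVneq j_in => // ->; rewrite (negbTE i_notin).
  by rewrite subrr.
pose W (x : K * F * 'I_p) := [seq i <- vars | slope x.1.1 i == x.1.2].
pose out (o : K * F * 'I_p -> bool) := [exists z in S, [forall k, coord (u k z) ==
  bit_coord (G k) iota (fun=> false) + \sum_v v *+ pick_residue (fun r => o (k, v, r))]].
have [|x|c [m_c size_c eval_c]] :=
  bm_circuit_of_gates (W := W) (l := circ_size t) (fun x => [set x.2]) out.
- by [].
- by rewrite size_filter (leq_trans (count_size _ _)) ?size_circ_vars.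
exists c; split=> // b; rewrite eval_c /prog_eval.
set z0 := circ_eval op (iota false) t (fun j => iota (b j)).
have valueE k : coord (u k z0) = bit_coord (G k) iota (fun=> false) +
    \sum_v v *+ pick_residue (fun r : 'I_p => mod_gate_val [seq i <- vars | slope k i == v] [set r] b).
  have p_gt0 : (0 < p)%N := prime_gt0 (pcharf_prime pF).
  under eq_bigr do rewrite (pick_residue_mod_gates _ _ p_gt0) big_filter.
  exact: (bit_coord_count (pG k) (fun x => uN k _) b pF (undup_uniq _) (slope0 k)).
apply/existsP/idP => [[z /andP[zS /forallP eq_z]]|z0S].
  suff -> : z0 = z by [].
  apply: u_inj => k; apply: coord_inj; rewrite ?uN // valueE.
  by apply/esym/eqP; apply: eq_z.
by exists z0; rewrite z0S /=; apply/forallP => k; rewrite valueE.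
Qed.

End Program.
End AffineTrace.

Unset Implicit Arguments.
Set Strict Implicit.

Theorem mainTheorem6 (A I : finType) (ar : I -> nat)
  (op : forall i : I, ('I_(ar i) -> A) -> A) (p : nat) :
  prime p ->
  simple_alg op ->
  simple_type2 op ->
  (forall N : {set A}, trace op (cong0 (A:=A)) (cong1 (A:=A)) N ->
     exists m : nat, #|N| = (p ^ m)%N) ->
  exists k C : nat,
    forall (n : nat) (t : @circuit A I ar n) (iota : bool -> A) (S : {set A}),
      circuit_wf t ->
      exists c : bm_circuit n p,
        (bm_m c <= k)%N /\ (bm_size c <= C * circ_size t)%N /\
        forall b : 'I_n -> bool, bm_eval c b = prog_eval op t iota S b.
Proof.
move=> p_prime simpleA type2 card_trace.
have [f [pf ncf] trace_f] := exists_trace op simpleA.1.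
have [F [e [e_inj [e_N affineN]]]] := type2 _ trace_f.
have pF : p \in [pchar F]%R.
  have [m card_N] := card_trace _ trace_f.
  have card_F : #|F| = (p ^ m)%N by rewrite -card_N -e_N card_imset // cardsT.
  exact: card_finPcharP card_F p_prime.
have [u [pu uN u_inj]] := separating_family simpleA (upoly_is_upoly pf) ncf.
exists #|{: A * A * F * 'I_p}|, (3 * #|{: A * A * F * 'I_p}|).+1 => n t iota S wf_t.
have [c [m_c size_c eval_c]] := program_bm_circuit simpleA e_inj e_N affineN pF pu uN u_inj iota S wf_t.
by exists c; rewrite m_c.
Qed.
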